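(* Let $W$ be a generalized contingent solution for (MOC), $(t,x)\in[0,T)\times\mathbb{R}^n$ and $y\in W(t,x)$. Assume $W$ is Lipschitz around $(t,x)$ and $y\in\mathcal{PE}(W(t,x),P)$. Then $$0\in\mathcal{E}\Big(\mathrm{cl}\Big(\bigcup_{(f,L)\in(\mathrm{FL})(x)}\big(L+D_\uparrow W((t,x,y);(1,f))\big)\Big),P\Big)+P.$$
   Context: Setting (MOC). Fix $T>0$, $I=[0,T]$, integers $n,m,p\ge1$, nonempty compact $U\subset\mathbb{R}^m$; $f:\mathbb{R}^n\times U\to\mathbb{R}^n$ and $L:\mathbb{R}^n\times U\to\mathbb{R}^p$ continuous, bounded, and Lipschitz in $x$ uniformly in $u$. $(\mathrm{FL})(x)=\mathrm{cl}\,\mathrm{co}\{(f(x,u),L(x,u)):u\in U\}$. Euclidean norms. $P\subset\mathbb{R}^p$: closed convex pointed cone containing $0$ with nonempty interior. $\mathcal{E}(S,P)=\{y\in S:(y-P)\cap S=\{y\}\}$; contingent cone $T_S(z)=\{v:\exists h_k\to0^+,\exists v_k\to v,z+h_kv_k\in S\}$; $\mathcal{PE}(S,P)=\{y\in\mathcal{E}(S,P):T_{S+P}(y)\cap(-P)=\{0\}\}$. For $W:I\times\mathbb{R}^n\rightrightarrows\mathbb{R}^p$, $W_\uparrow=W+P$; the contingent derivative $DW_\uparrow(t,x,y)$ is the set-valued map whose graph is $T_{\mathrm{gph}W_\uparrow}(t,x,y)$, its value at $(\tau,v)$ written $DW_\uparrow((t,x,y);(\tau,v))$; $D_\uparrow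 W((t,x,y);(\tau,v))=\mathcal{E}(DW_\uparrow((t,x,y);(\tau,v)),P)$. $W$ is Lipschitz around $(t,x)$ if there are $l>0$ and a neighborhood $\mathcal{O}$ with $W(z_1)\subset W(z_2)+l\|z_1-z_2\|\mathbf{B}$ for $z_1,z_2\in\mathcal{O}$. Extremal element map: for all $(t,x)$, $y\in W(t,x)$: $W(t,x)\cap(y-P)=\{y\}=W(t,x)\cap(y+P)$. Generalized contingent solution: an extremal element map $W$ with (i) for all $(t,x)\in[0,T)\times\mathbb{R}^n$, $y\in W(t,x)$, some $(\bar f,\bar L)\in(\mathrm{FL})(x)$ satisfies $-\bar L\in DW_\uparrow((t,x,y);(1,\bar f))$; (ii) for all $(t,x)\in(0,T]\times\mathbb{R}^n$, $y\in W(t,x)$, $(f,L)\in(\mathrm{FL})(x)$: $L\in DW_\uparrow((t,x,y);(-1,-f))$; (iii) $W(T,x)=\{0\}$. *)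

From Stdlib Require Import Reals List.
From Stdlib Require Fin.
Open Scope R_scope.

Definition vec (k : nat) := Fin.t k -> R.

Fixpoint fsum (k : nat) : (Fin.t k -> R) -> R :=
  match k with
  | O => fun _ => 0
  | S j => fun g => g Fin.F1 + fsum j (fun i => g (Fin.FS i))
  end.

Definition vzero {k} : vec k := fun _ => 0.
Definition vadd {k} (a b : vec k) : vec k := fun i => a i + b i.
Definition vopp {k} (a : vec k) : vec k := fun i => - a i.
Definition vsub {k} (a b : vec k) : vec k := fun i => a i - b i.
Definition vscal {k} (c : R) (a : vec k) : vec k := fun i => c * a i.
Definition vnorm2 {k} (a : vec k) : R := fsum k (fun i => a i * a i).
Definition vnorm {k} (a : vec k) : R := sqrt (vnorm2 a).

Definition pnorm {a b} (u : vec a) (v : vec b) : R := sqrt (vnorm2 u + vnorm2 v).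
Definition tnorm {a b} (s : R) (u : vec a) (v : vec b) : R :=
  sqrt (s * s + vnorm2 u + vnorm2 v).

Definition vcv {k} (w : nat -> vec k) (v : vec k) : Prop :=
  Un_cv (fun j => vnorm (vsub (w j) v)) 0.

Definition vcl {k} (S : vec k -> Prop) (z : vec k) : Prop :=
  forall eps, 0 < eps -> exists w, S w /\ vnorm (vsub z w) < eps.
Definition pcl {a b} (S : vec a * vec b -> Prop) (z : vec a * vec b) : Prop :=
  forall eps, 0 < eps -> exists w, S w /\
     pnorm (vsub (fst z) (fst w)) (vsub (snd z) (snd w)) < eps.

Definition pco {a b} (S : vec a * vec b -> Prop) (z : vec a * vec b) : Prop :=
  exists l : list (R * (vec a * vec b)),
    l <> nil /\
    (forall c, In c l -> 0 <= fst c /\ S (snd c)) /\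
    fold_right (fun c s => fst c + s) 0 l = 1 /\
    fst z = fold_right (fun c s => vadd (vscal (fst c) (fst (snd c))) s) vzero l /\
    snd z = fold_right (fun c s => vadd (vscal (fst c) (snd (snd c))) s) vzero l.

(* nonempty compact subset of R^m (Heine-Borel: closed and bounded) *)
Definition nonempty_compact {m} (U : vec m -> Prop) : Prop :=
  (exists u, U u) /\ (forall z, vcl U z -> U z) /\
  (exists M, forall u, U u -> vnorm u <= M).

Definition MOC_regular {n m k} (U : vec m -> Prop) (g : vec n -> vec m -> vec k) : Prop :=
  (forall x u, U u -> forall eps, 0 < eps -> exists d, 0 < d /\
      forall x' u', U u' -> pnorm (vsub x' x) (vsub u' u) < d ->
        vnorm (vsub (g x' u') (g x u)) < eps) /\
  (exists M, forall x u, U u -> vnorm (g x u) <= M) /\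
  (exists K, forall x x' u, U u ->
      vnorm (vsub (g x u) (g x' u)) <= K * vnorm (vsub x x')).

Definition FL {n m p} (U : vec m -> Prop) (f : vec n -> vec m -> vec n)
  (L : vec n -> vec m -> vec p) (x : vec n) : vec n * vec p -> Prop :=
  pcl (pco (fun z => exists u, U u /\ z = (f x u, L x u))).

Definition good_cone {p} (P : vec p -> Prop) : Prop :=
  P vzero /\
  (forall z, vcl P z -> P z) /\
  (forall a b, P a -> P b -> P (vadd a b)) /\
  (forall c a, 0 <= c -> P a -> P (vscal c a)) /\
  (forall a, P a -> P (vopp a) -> a = vzero) /\
  (exists c r, 0 < r /\ forall z, vnorm (vsub z c) < r -> P z).

Definition vsum_set {p} (S P : vec p -> Prop) (z : vec p) : Prop :=
  exists s q, S s /\ P q /\ z = vadd s q.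

Definition Eff {p} (S P : vec p -> Prop) (y : vec p) : Prop :=
  S y /\ forall z, S z -> (exists q, P q /\ z = vsub y q) -> z = y.

Definition Tcone {p} (S : vec p -> Prop) (z v : vec p) : Prop :=
  exists (h : nat -> R) (w : nat -> vec p),
    (forall j, 0 < h j) /\ Un_cv h 0 /\ vcv w v /\
    forall j, S (vadd z (vscal (h j) (w j))).

Definition PEff {p} (S P : vec p -> Prop) (y : vec p) : Prop :=
  Eff S P y /\
  forall v, Tcone (vsum_set S P) y v -> P (vopp v) -> v = vzero.

Definition Wup {n p} (P : vec p -> Prop) (W : R -> vec n -> vec p -> Prop)
  (t : R) (x : vec n) : vec p -> Prop := vsum_set (W t x) P.

(* graph of W_up, W being defined on I x R^n with I = [0,T] *)
Definition gphWup {n p} (T : R) (P : vec p -> Prop) (W : R -> vec n -> vec p -> Prop)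
  (t : R) (x : vec n) (y : vec p) : Prop :=
  0 <= t <= T /\ Wup P W t x y.

Definition Tgph {n p} (G : R -> vec n -> vec p -> Prop) (t : R) (x : vec n) (y : vec p)
  (tau : R) (v : vec n) (w : vec p) : Prop :=
  exists (h : nat -> R) (tauk : nat -> R) (vk : nat -> vec n) (wk : nat -> vec p),
    (forall j, 0 < h j) /\ Un_cv h 0 /\
    Un_cv (fun j => tnorm (tauk j - tau) (vsub (vk j) v) (vsub (wk j) w)) 0 /\
    forall j, G (t + h j * tauk j) (vadd x (vscal (h j) (vk j)))
                (vadd y (vscal (h j) (wk j))).

Definition DWup {n p} (T : R) (P : vec p -> Prop) (W : R -> vec n -> vec p -> Prop)
  (t : R) (x : vec n) (y : vec p) (tau : R) (v : vec n) : vec p -> Prop :=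
  Tgph (gphWup T P W) t x y tau v.

Definition DupW {n p} (T : R) (P : vec p -> Prop) (W : R -> vec n -> vec p -> Prop)
  (t : R) (x : vec n) (y : vec p) (tau : R) (v : vec n) : vec p -> Prop :=
  Eff (DWup T P W t x y tau v) P.

Definition extremal_map {n p} (T : R) (P : vec p -> Prop) (W : R -> vec n -> vec p -> Prop) : Prop :=
  forall t x y, 0 <= t <= T -> W t x y ->
    (forall z, W t x z -> (exists q, P q /\ z = vsub y q) -> z = y) /\
    (forall z, W t x z -> (exists q, P q /\ z = vadd y q) -> z = y).

Definition gen_contingent_solution {n m p} (T : R) (U : vec m -> Prop)
  (f : vec n -> vec m -> vec n) (L : vec n -> vec m -> vec p)
  (P : vec p -> Prop) (W : R -> vec n -> vec p -> Prop) : Prop :=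
  extremal_map T P W /\
  (forall t x y, 0 <= t < T -> W t x y ->
     exists fb Lb, FL U f L x (fb, Lb) /\ DWup T P W t x y 1 fb (vopp Lb)) /\
  (forall t x y, 0 < t <= T -> W t x y ->
     forall fv Lv, FL U f L x (fv, Lv) -> DWup T P W t x y (-1) (vopp fv) Lv) /\
  (forall x y, W T x y <-> y = vzero).

(* W Lipschitz around (t,x): neighbourhood taken as a ball in I x R^n *)
Definition lipschitz_around {n p} (T : R) (W : R -> vec n -> vec p -> Prop)
  (t : R) (x : vec n) : Prop :=
  exists l d, 0 < l /\ 0 < d /\
    forall t1 x1 t2 x2,
      0 <= t1 <= T -> 0 <= t2 <= T ->
      pnorm (fun _ : Fin.t 1 => t1 - t) (vsub x1 x) < d ->
      pnorm (fun _ : Fin.t 1 => t2 - t) (vsub x2 x) < d ->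
      forall y1, W t1 x1 y1 -> exists y2, W t2 x2 y2 /\
        vnorm (vsub y1 y2) <= l * pnorm (fun _ : Fin.t 1 => t1 - t2) (vsub x1 x2).

From Stdlib Require Import Reals List Lra Lia Psatz.
From Stdlib Require Import Classical ClassicalEpsilon FunctionalExtensionality.
From Stdlib Require Fin.
Open Scope R_scope.

(* The proof rests on two facts.
   - Existence of efficient points (exists_efficient_below): a closed set whose lower
     section {a <= z} is nonempty and bounded contains an efficient point below z.  It
     is the limit of a near-greedy P-decreasing sequence; a cone that is closed and
     pointed has bounded order intervals (cone_normal), which makes such bounded
     decreasing sequences converge.
   - An a priori estimate (derivative_bound): by Lipschitz continuity, large values d
     of DW_up((t,x,y);(1,v)) produce, after normalisation, tangent directions of
     W(t,x) + P at y; proper efficiency of y then forces |d| <= C (1 + |z|) whenever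
     d <= z.
   Condition (i) of contingent solutions gives (fb,Lb) in (FL)(x) with
   -Lb in DW_up((t,x,y);(1,fb)).  The first fact, applied in this closed derivative
   set below -Lb, gives e in D_up W((t,x,y);(1,fb)) with Lb + e <= 0; applied in S
   below 0 (bounded there by the estimate), it gives s in E(S,P) with s <= 0, so that
   0 = s + (0 - s). *)

Ltac vext := apply functional_extensionality; intro;
  unfold vadd, vsub, vopp, vscal, vzero; try ring.

Lemma fsum_ext k (g h : Fin.t k -> R) : (forall i, g i = h i) -> fsum k g = fsum k h.
Proof.
  revert g h; induction k as [|k IH]; simpl; intros g h H; auto.
  rewrite H, (IH (fun i => g (Fin.FS i)) (fun i => h (Fin.FS i))); auto.
Qed.

Lemma fsum_add k g h : fsum k (fun i => g i + h i) = fsum k g + fsum k h.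
Proof. revert g h; induction k as [|k IH]; simpl; intros; [ring|]. rewrite IH; ring. Qed.

Lemma fsum_scal k c g : fsum k (fun i => c * g i) = c * fsum k g.
Proof. revert g; induction k as [|k IH]; simpl; intros; [ring|]. rewrite IH; ring. Qed.

Lemma fsum_nonneg k g : (forall i, 0 <= g i) -> 0 <= fsum k g.
Proof.
  revert g; induction k as [|k IH]; simpl; intros g H; [lra|].
  pose proof (IH (fun i => g (Fin.FS i)) (fun i => H _)). pose proof (H Fin.F1). lra.
Qed.

Lemma fsum_eq0 k g : (forall i, 0 <= g i) -> fsum k g = 0 -> forall i, g i = 0.
Proof.
  revert g; induction k as [|k IH]; simpl; intros g H E i; [inversion i|].
  pose proof (fsum_nonneg k (fun i => g (Fin.FS i)) (fun i => H _)). pose proof (H Fin.F1).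
  apply (Fin.caseS' i (fun i => g i = 0)); [lra|].
  intro j. apply (IH (fun i => g (Fin.FS i))); [intros; apply H | lra].
Qed.

Definition vdot {k} (a b : vec k) : R := fsum k (fun i => a i * b i).

Lemma vnorm2_ge0 {k} (a : vec k) : 0 <= vnorm2 a.
Proof. apply fsum_nonneg; intros; nra. Qed.

Lemma vnorm2_lincomb {k} c e (a b : vec k) :
  vnorm2 (vadd (vscal c a) (vscal e b)) = c * c * vnorm2 a + 2 * c * e * vdot a b + e * e * vnorm2 b.
Proof.
  unfold vnorm2, vdot, vadd, vscal. rewrite <- !fsum_scal, <- !fsum_add.
  apply fsum_ext; intros; ring.
Qed.

(* Cauchy-Schwarz, from 0 <= |B a - D b|^2 = B (A B - D^2) with B = |b|^2, D = <a,b>. *)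
Lemma cauchy_schwarz {k} (a b : vec k) : vdot a b * vdot a b <= vnorm2 a * vnorm2 b.
Proof.
  pose proof (vnorm2_ge0 b) as Hb.
  destruct (Req_dec (vnorm2 b) 0) as [Hb0|Hb0].
  - assert (Hdot : vdot a b = 0).
    { unfold vdot. rewrite (fsum_ext _ _ (fun i => 0 * a i)); [rewrite fsum_scal; ring|].
      intro i. pose proof (fsum_eq0 k (fun i => b i * b i) (fun i => ltac:(nra)) Hb0 i). simpl in H. nra. }
    rewrite Hdot, Hb0. lra.
  - pose proof (vnorm2_ge0 (vadd (vscal (vnorm2 b) a) (vscal (- vdot a b) b))) as H.
    rewrite vnorm2_lincomb in H.
    assert (0 <= vnorm2 b * (vnorm2 a * vnorm2 b - vdot a b * vdot a b)) by nra.
    assert (0 < vnorm2 b) by lra. nra.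
Qed.

Lemma vnorm_ge0 {k} (a : vec k) : 0 <= vnorm a.
Proof. apply sqrt_pos. Qed.

Lemma vnorm_sq {k} (a : vec k) : vnorm a * vnorm a = vnorm2 a.
Proof. apply sqrt_sqrt, vnorm2_ge0. Qed.

Lemma vnorm_triangle {k} (a b : vec k) : vnorm (vadd a b) <= vnorm a + vnorm b.
Proof.
  pose proof (vnorm_ge0 a). pose proof (vnorm_ge0 b).
  unfold vnorm at 1. rewrite <- (sqrt_square (vnorm a + vnorm b)) by lra.
  apply sqrt_le_1_alt.
  replace (vadd a b) with (vadd (vscal 1 a) (vscal 1 b)) by vext.
  rewrite vnorm2_lincomb, <- (vnorm_sq a), <- (vnorm_sq b).
  pose proof (cauchy_schwarz a b) as Hcs. rewrite <- (vnorm_sq a), <- (vnorm_sq b) in Hcs.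
  assert (vdot a b <= vnorm a * vnorm b).
  { destruct (Rle_lt_dec (vdot a b) (vnorm a * vnorm b)) as [|Hlt]; [auto|].
    assert (0 <= vnorm a * vnorm b) by (apply Rmult_le_pos; auto). nra. }
  nra.
Qed.

Lemma vnorm_scal {k} c (a : vec k) : vnorm (vscal c a) = Rabs c * vnorm a.
Proof.
  unfold vnorm. replace (vscal c a) with (vadd (vscal c a) (vscal 0 a)) by vext.
  rewrite vnorm2_lincomb.
  replace (c * c * vnorm2 a + 2 * c * 0 * vdot a a + 0 * 0 * vnorm2 a) with (Rsqr c * vnorm2 a)
    by (unfold Rsqr; ring).
  rewrite sqrt_mult_alt, sqrt_Rsqr_abs by apply Rle_0_sqr. reflexivity.
Qed.

Lemma vnorm_opp {k} (a : vec k) : vnorm (vopp a) = vnorm a.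
Proof.
  replace (vopp a) with (vscal (-1) a) by vext.
  rewrite vnorm_scal, Rabs_left by lra; ring.
Qed.

Lemma vnorm_sub_sym {k} (a b : vec k) : vnorm (vsub a b) = vnorm (vsub b a).
Proof. replace (vsub a b) with (vopp (vsub b a)) by vext. apply vnorm_opp. Qed.

Lemma vnorm_vzero {k} : vnorm (@vzero k) = 0.
Proof.
  replace (@vzero k) with (vscal 0 (@vzero k)) by vext.
  rewrite vnorm_scal, Rabs_R0. ring.
Qed.

Lemma vnorm_eq0 {k} (a : vec k) : vnorm a = 0 -> a = vzero.
Proof.
  intro H. unfold vnorm in H. apply sqrt_eq_0 in H; [|apply vnorm2_ge0].
  apply functional_extensionality; intro i. unfold vzero.
  pose proof (fsum_eq0 k (fun i => a i * a i) (fun i => ltac:(nra)) H i). simpl in H0. nra.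
Qed.

Lemma vnorm_sub_tri {k} (a b c : vec k) :
  vnorm (vsub a c) <= vnorm (vsub a b) + vnorm (vsub b c).
Proof. replace (vsub a c) with (vadd (vsub a b) (vsub b c)) by vext. apply vnorm_triangle. Qed.

Lemma vnorm_le_sub {k} (a b : vec k) : vnorm a <= vnorm (vsub a b) + vnorm b.
Proof. replace a with (vadd (vsub a b) b) at 1 by vext. apply vnorm_triangle. Qed.

Lemma vnorm_head {k} (a : vec (S k)) : Rabs (a Fin.F1) <= vnorm a.
Proof.
  unfold vnorm. rewrite <- sqrt_Rsqr_abs. apply sqrt_le_1_alt.
  unfold vnorm2; simpl. pose proof (vnorm2_ge0 (fun i => a (Fin.FS i))).
  unfold Rsqr, vnorm2 in *; lra.
Qed.

Lemma vnorm_tail {k} (a : vec (S k)) : vnorm (fun i => a (Fin.FS i)) <= vnorm a.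
Proof.
  unfold vnorm. apply sqrt_le_1_alt. unfold vnorm2 at 2; simpl.
  fold (vnorm2 (fun i => a (Fin.FS i))). nra.
Qed.

Lemma sqrt3_le a b c : 0 <= b -> 0 <= c -> sqrt (a * a + b + c) <= Rabs a + sqrt b + sqrt c.
Proof.
  intros Hb Hc. pose proof (Rabs_pos a); pose proof (sqrt_pos b); pose proof (sqrt_pos c).
  rewrite <- (sqrt_square (Rabs a + sqrt b + sqrt c)) by lra.
  apply sqrt_le_1_alt.
  pose proof (sqrt_sqrt b Hb). pose proof (sqrt_sqrt c Hc).
  assert (a * a = Rabs a * Rabs a) by (unfold Rabs; destruct (Rcase_abs a); ring).
  nra.
Qed.

Lemma tnorm_le {a b} s (u : vec a) (v : vec b) : tnorm s u v <= Rabs s + vnorm u + vnorm v.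
Proof. apply sqrt3_le; apply vnorm2_ge0. Qed.

Lemma tnorm_ge {a b} s (u : vec a) (v : vec b) :
  Rabs s <= tnorm s u v /\ vnorm u <= tnorm s u v /\ vnorm v <= tnorm s u v.
Proof.
  pose proof (vnorm2_ge0 u). pose proof (vnorm2_ge0 v).
  unfold tnorm, vnorm. repeat split; try (apply sqrt_le_1_alt; nra).
  rewrite <- sqrt_Rsqr_abs. apply sqrt_le_1_alt. unfold Rsqr. nra.
Qed.

Lemma pnorm_time_le {a} s (u : vec a) : pnorm (fun _ : Fin.t 1 => s) u <= Rabs s + vnorm u.
Proof.
  pose proof (sqrt3_le s (vnorm2 u) 0 (vnorm2_ge0 u) (Rle_refl 0)) as H.
  rewrite sqrt_0, Rplus_0_r, Rplus_0_r in H.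
  unfold pnorm, vnorm2 at 1; simpl. rewrite Rplus_0_r. exact H.
Qed.

Lemma pnorm_ge {a b} (u : vec a) (v : vec b) : vnorm u <= pnorm u v /\ vnorm v <= pnorm u v.
Proof.
  pose proof (vnorm2_ge0 u). pose proof (vnorm2_ge0 v).
  unfold pnorm, vnorm. split; apply sqrt_le_1_alt; lra.
Qed.

Lemma Un_cv0_elim (u : nat -> R) :
  Un_cv u 0 -> forall eps, 0 < eps -> exists N, forall n, (N <= n)%nat -> Rabs (u n) < eps.
Proof.
  intros H eps He. destruct (H eps He) as [N HN]. exists N. intros n Hn.
  specialize (HN n Hn). unfold R_dist in HN. rewrite Rminus_0_r in HN. auto.
Qed.

Lemma vcv_elim {k} (a : nat -> vec k) l :
  vcv a l -> forall eps, 0 < eps -> exists N, forall n, (N <= n)%nat -> vnorm (vsub (a n) l) < eps.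
Proof.
  intros H eps He. destruct (Un_cv0_elim _ H eps He) as [N HN]. exists N. intros n Hn.
  specialize (HN n Hn). rewrite Rabs_pos_eq in HN by apply vnorm_ge0. auto.
Qed.

Lemma inv_succ_pos n : 0 < / (INR n + 1).
Proof. apply Rinv_0_lt_compat. pose proof (pos_INR n). lra. Qed.

Lemma inv_succ_antitone i j : (i <= j)%nat -> / (INR j + 1) <= / (INR i + 1).
Proof. intro H. apply le_INR in H. pose proof (pos_INR i). apply Rinv_le_contravar; lra. Qed.

Lemma inv_succ_small eps : 0 < eps -> exists N, forall n, (N <= n)%nat -> / (INR n + 1) < eps.
Proof.
  intro H. destruct (archimed_cor1 eps H) as [N [HN1 HN2]].
  exists N. intros n Hn. apply le_INR in Hn. assert (0 < INR N) by (apply lt_0_INR; auto).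
  eapply Rle_lt_trans; [|exact HN1]. apply Rinv_le_contravar; lra.
Qed.

Lemma Un_cv0_of_bound (u : nat -> R) c :
  (forall k, Rabs (u k) <= c * / (INR k + 1)) -> Un_cv u 0.
Proof.
  intros H eps He.
  assert (Hc : 0 <= c) by (pose proof (H 0%nat); pose proof (Rabs_pos (u 0%nat));
                           pose proof (inv_succ_pos 0); nra).
  destruct (inv_succ_small (eps / (c + 1))) as [N HN]; [apply Rdiv_lt_0_compat; lra|].
  exists N. intros n Hn. unfold R_dist. rewrite Rminus_0_r.
  specialize (HN n Hn). specialize (H n). pose proof (inv_succ_pos n).
  assert (c * / (INR n + 1) <= (c + 1) * / (INR n + 1)) by nra.
  assert ((c + 1) * / (INR n + 1) < (c + 1) * (eps / (c + 1))) by (apply Rmult_lt_compat_l; lra).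
  replace ((c + 1) * (eps / (c + 1))) with eps in * by (field; lra). lra.
Qed.

Lemma vcv_perturb {k} (a b : nat -> vec k) l c :
  vcv a l -> (forall j, vnorm (vsub (b j) (a j)) <= c * / (INR j + 1)) -> vcv b l.
Proof.
  intros Ha Hb eps He.
  destruct (vcv_elim a l Ha (eps / 2) ltac:(lra)) as [N1 HN1].
  destruct (Un_cv0_of_bound (fun j => vnorm (vsub (b j) (a j))) c) with (eps := eps / 2)
    as [N2 HN2]; [intro j; rewrite Rabs_pos_eq by apply vnorm_ge0; apply Hb | lra |].
  exists (max N1 N2). intros j Hj. unfold R_dist. rewrite Rminus_0_r, Rabs_pos_eq by apply vnorm_ge0.
  specialize (HN1 j ltac:(lia)). specialize (HN2 j ltac:(lia)).
  unfold R_dist in HN2. rewrite Rminus_0_r, Rabs_pos_eq in HN2 by apply vnorm_ge0.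
  pose proof (vnorm_sub_tri (b j) (a j) l). lra.
Qed.

Definition extraction (phi : nat -> nat) : Prop := forall j, (phi j < phi (S j))%nat.

Lemma extraction_ge phi : extraction phi -> forall j, (j <= phi j)%nat.
Proof. intros H j; induction j; [lia|]. specialize (H j); lia. Qed.

Lemma extraction_comp phi psi : extraction phi -> extraction psi -> extraction (fun j => phi (psi j)).
Proof.
  intros Hphi Hpsi j.
  assert (Hmono : forall i i', (i <= i')%nat -> (phi i <= phi i')%nat).
  { intros i i' Hii'; induction Hii' as [|i' _ IH]; [lia|]. specialize (Hphi i'); lia. }
  pose proof (Hmono _ _ (Hpsi j)). specialize (Hphi (psi j)). lia.
Qed.

Lemma extraction_inv_succ phi j : extraction phi -> / (INR (phi j) + 1) <= / (INR j + 1).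
Proof. intro H. apply inv_succ_antitone, extraction_ge, H. Qed.

(* Bolzano-Weierstrass on R: a cluster point (Stdlib) yields a convergent subsequence. *)
Lemma bounded_subseq_R (u : nat -> R) M : (forall k, Rabs (u k) <= M) ->
  exists phi l, extraction phi /\ Un_cv (fun j => u (phi j)) l.
Proof.
  intro H.
  destruct (Bolzano_Weierstrass u (fun c => -M <= c <= M) (compact_P3 (-M) M)) as [l Hl].
  { intro n. specialize (H n). unfold Rabs in H. destruct (Rcase_abs (u n)); lra. }
  assert (G : forall N j, {q | (N <= q)%nat /\ Rabs (u q - l) < / (INR j + 1)}).
  { intros N j. apply constructive_indefinite_description.
    destruct (Hl (disc l (mkposreal _ (inv_succ_pos j))) N) as [q [Hq1 Hq2]].
    - exists (mkposreal _ (inv_succ_pos j)). intros z Hz; exact Hz.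
    - exists q; split; auto. }
  set (phi := fix phi j := match j with 0%nat => proj1_sig (G 0%nat 0%nat)
                            | S j' => proj1_sig (G (S (phi j')) (S j')) end).
  assert (Hclose : forall j, Rabs (u (phi j) - l) <= 1 * / (INR j + 1)).
  { intro j; rewrite Rmult_1_l; destruct j; simpl; left.
    - exact (proj2 (proj2_sig (G 0%nat 0%nat))).
    - exact (proj2 (proj2_sig (G (S (phi j)) (S j)))). }
  exists phi, l; split.
  - intro j. simpl. pose proof (proj1 (proj2_sig (G (S (phi j)) (S j)))). simpl in H0. lia.
  - intros eps He. destruct (Un_cv0_of_bound _ 1 Hclose eps He) as [N HN].
    exists N. intros j Hj. specialize (HN j Hj). unfold R_dist in *. rewrite Rminus_0_r in HN. exact HN.
Qed.

Lemma bounded_subseq {k} (w : nat -> vec k) M : (forall j, vnorm (w j) <= M) ->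
  exists phi l, extraction phi /\ vcv (fun j => w (phi j)) l.
Proof.
  revert w M. induction k as [|k IH]; intros w M H.
  - exists (fun j => j), vzero. split; [intro; lia|].
    intros eps Heps. exists 0%nat. intros n _. unfold R_dist, vnorm, vnorm2. simpl.
    rewrite sqrt_0, Rminus_0_r, Rabs_R0. auto.
  - destruct (bounded_subseq_R (fun j => w j Fin.F1) M) as [phi1 [l1 [Hp1 Hc1]]].
    { intro j. eapply Rle_trans; [apply vnorm_head | apply H]. }
    destruct (IH (fun j i => w (phi1 j) (Fin.FS i)) M) as [phi2 [l2 [Hp2 Hc2]]].
    { intro j. eapply Rle_trans; [apply vnorm_tail | apply H]. }
    exists (fun j => phi1 (phi2 j)), (fun i => Fin.caseS' i (fun _ => R) l1 l2).
    split; [apply extraction_comp; auto|].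
    intros eps Heps.
    destruct (Hc1 (eps / 2) ltac:(lra)) as [N1 HN1].
    destruct (vcv_elim _ _ Hc2 (eps / 2) ltac:(lra)) as [N2 HN2].
    exists (max N1 N2). intros j Hj. unfold R_dist. rewrite Rminus_0_r, Rabs_pos_eq by apply vnorm_ge0.
    specialize (HN2 j ltac:(lia)).
    specialize (HN1 (phi2 j) ltac:(pose proof (extraction_ge phi2 Hp2 j); lia)).
    unfold R_dist in HN1.
    apply Rle_lt_trans with (Rabs (w (phi1 (phi2 j)) Fin.F1 - l1)
                             + vnorm (vsub (fun i => w (phi1 (phi2 j)) (Fin.FS i)) l2)); [|lra].
    unfold vnorm at 1, vnorm2; simpl. unfold vsub at 1; simpl.
    fold (vnorm2 (vsub (fun i => w (phi1 (phi2 j)) (Fin.FS i)) l2)).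
    pose proof (sqrt3_le (w (phi1 (phi2 j)) Fin.F1 - l1)
                  (vnorm2 (vsub (fun i => w (phi1 (phi2 j)) (Fin.FS i)) l2)) 0
                  (vnorm2_ge0 _) (Rle_refl 0)) as Hs.
    rewrite sqrt_0, !Rplus_0_r in Hs. exact Hs.
Qed.

Definition vclosed {k} (A : vec k -> Prop) : Prop := forall z, vcl A z -> A z.

Lemma closed_lim {k} (A : vec k -> Prop) (a : nat -> vec k) l :
  vclosed A -> (forall j, A (a j)) -> vcv a l -> A l.
Proof.
  intros Hc Ha Hv. apply Hc. intros eps He.
  destruct (vcv_elim a l Hv eps He) as [N HN]. exists (a N). split; auto.
  rewrite vnorm_sub_sym. apply HN. lia.
Qed.

Lemma vcl_closed {k} (A : vec k -> Prop) : vclosed (vcl A).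
Proof.
  intros z H eps He. destruct (H (eps / 2) ltac:(lra)) as [w [Hw1 Hw2]].
  destruct (Hw1 (eps / 2) ltac:(lra)) as [w' [H1 H2]].
  exists w'. split; auto. pose proof (vnorm_sub_tri z w w'). lra.
Qed.

Lemma vcv_intro {k} (a : nat -> vec k) l :
  (forall eps, 0 < eps -> exists N, forall n, (N <= n)%nat -> vnorm (vsub (a n) l) < eps) -> vcv a l.
Proof.
  intros H eps He. destruct (H eps He) as [N HN]. exists N. intros n Hn.
  unfold R_dist. rewrite Rminus_0_r, Rabs_pos_eq by apply vnorm_ge0. auto.
Qed.

Lemma vnorm_small {k} (a : vec k) : (forall eps, 0 < eps -> vnorm a < eps) -> a = vzero.
Proof.
  intro H. apply vnorm_eq0. pose proof (vnorm_ge0 a).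
  destruct (Req_dec (vnorm a) 0); auto. specialize (H (vnorm a) ltac:(lra)). lra.
Qed.

Lemma vcv_opp {k} (a : nat -> vec k) l : vcv a l -> vcv (fun j => vopp (a j)) (vopp l).
Proof.
  unfold vcv. replace (fun j => vnorm (vsub (vopp (a j)) (vopp l))) with (fun j => vnorm (vsub (a j) l)); auto.
  apply functional_extensionality; intro j.
  replace (vsub (vopp (a j)) (vopp l)) with (vopp (vsub (a j) l)) by vext. symmetry; apply vnorm_opp.
Qed.

Lemma unit_lim {k} (a : nat -> vec k) l : (forall j, vnorm (a j) = 1) -> vcv a l -> vnorm l = 1.
Proof.
  intros H Hv.
  assert (Hclose : forall eps, 0 < eps -> Rabs (vnorm l - 1) < eps).
  { intros eps He. destruct (vcv_elim a l Hv eps He) as [N HN]. specialize (HN N (le_n _)).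
    pose proof (vnorm_le_sub l (a N)). pose proof (vnorm_le_sub (a N) l).
    rewrite (vnorm_sub_sym l (a N)), H in *. apply Rabs_def1; lra. }
  destruct (Req_dec (vnorm l) 1) as [|Hne]; auto.
  assert (0 < Rabs (vnorm l - 1)) by (apply Rabs_pos_lt; lra).
  specialize (Hclose _ H0). lra.
Qed.

Lemma vnorm_normalize {k} (a : vec k) : 0 < vnorm a -> vnorm (vscal (/ vnorm a) a) = 1.
Proof. intro H. rewrite vnorm_scal, Rabs_pos_eq by (left; apply Rinv_0_lt_compat; auto). field. lra. Qed.

Definition ple {p} (P : vec p -> Prop) (a b : vec p) : Prop := P (vsub b a).

Section Cone.
Context {p : nat} (P : vec p -> Prop) (HP : good_cone P).

Lemma cone_closed : vclosed P.
Proof. destruct HP as [_ [Hc _]]. exact Hc. Qed.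

Lemma cone_scal c a : 0 <= c -> P a -> P (vscal c a).
Proof. destruct HP as [_ [_ [_ [Hs _]]]]. apply Hs. Qed.

Lemma ple_refl a : ple P a a.
Proof. destruct HP as [P0 _]. unfold ple. replace (vsub a a) with (@vzero p) by vext. auto. Qed.

Lemma ple_trans a b c : ple P a b -> ple P b c -> ple P a c.
Proof.
  destruct HP as [_ [_ [Padd _]]]. unfold ple. intros H1 H2.
  replace (vsub c a) with (vadd (vsub b a) (vsub c b)) by vext. auto.
Qed.

Lemma dominated_direction (d z : nat -> vec p) :
  (forall k, ple P (d k) (z k)) -> (forall k, (INR k + 1) * vnorm (z k) < vnorm (d k)) ->
  exists phi l, extraction phi /\ vcv (fun j => vscal (/ vnorm (d (phi j))) (d (phi j))) l /\
    vnorm l = 1 /\ P (vopp l).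
Proof.
  intros Hdz Hlarge.
  assert (Hd : forall k, 0 < vnorm (d k)).
  { intro k. specialize (Hlarge k). pose proof (vnorm_ge0 (z k)). pose proof (pos_INR k). nra. }
  set (u := fun k => vscal (/ vnorm (d k)) (d k)).
  set (b := fun k => vscal (/ vnorm (d k)) (z k)).
  assert (Hu : forall k, vnorm (u k) = 1) by (intro; apply vnorm_normalize, Hd).
  destruct (bounded_subseq u 1) as [phi [l [Hphi Hcv]]]; [intro; rewrite Hu; lra|].
  exists phi, l. repeat split; auto; [apply (unit_lim (fun j => u (phi j))); auto|].
  apply (closed_lim P (fun j => vsub (b (phi j)) (u (phi j)))); [apply cone_closed| |].
  - intro j. replace (vsub (b (phi j)) (u (phi j)))
      with (vscal (/ vnorm (d (phi j))) (vsub (z (phi j)) (d (phi j)))) by (unfold b, u; vext).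
    apply cone_scal; [left; apply Rinv_0_lt_compat, Hd | apply Hdz].
  - apply (vcv_perturb (fun j => vopp (u (phi j))) _ _ 1); [apply vcv_opp, Hcv|].
    intro j. replace (vsub (vsub (b (phi j)) (u (phi j))) (vopp (u (phi j)))) with (b (phi j)) by vext.
    rewrite Rmult_1_l. eapply Rle_trans; [|apply extraction_inv_succ, Hphi].
    unfold b. specialize (Hlarge (phi j)). specialize (Hd (phi j)). pose proof (pos_INR (phi j)).
    rewrite vnorm_scal, Rabs_pos_eq by (left; apply Rinv_0_lt_compat; auto).
    apply Rmult_le_reg_l with (vnorm (d (phi j)) * (INR (phi j) + 1)); [nra|].
    field_simplify; lra.
Qed.

Lemma cone_normal : exists C, 0 < C /\ forall q a, P q -> ple P q a -> vnorm q <= C * vnorm a.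
Proof.
  apply NNPP; intro Hn.
  assert (Hk : forall k : nat, exists qa : vec p * vec p,
    P (fst qa) /\ ple P (fst qa) (snd qa) /\ (INR k + 1) * vnorm (snd qa) < vnorm (fst qa)).
  { intro k. apply NNPP; intro Hk. apply Hn. exists (INR k + 1). split; [pose proof (pos_INR k); lra|].
    intros q a Hq Ha. apply Rnot_lt_le. intro Hl. apply Hk. exists (q, a); simpl; auto. }
  apply choice in Hk as [g Hg].
  destruct (dominated_direction (fun k => fst (g k)) (fun k => snd (g k))) as [phi [l [_ [Hcv [Hl Hnl]]]]];
    try (intro k; apply (Hg k)).
  assert (P l).
  { apply (closed_lim P (fun j => vscal (/ vnorm (fst (g (phi j)))) (fst (g (phi j)))) l cone_closed);
      [|exact Hcv]. intro j. apply cone_scal; [|apply (Hg (phi j))].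
    left. apply Rinv_0_lt_compat. destruct (Hg (phi j)) as [_ [_ H]].
    pose proof (vnorm_ge0 (snd (g (phi j)))). pose proof (pos_INR (phi j)). nra. }
  destruct HP as [_ [_ [_ [_ [Ppt _]]]]].
  pose proof (Ppt l H Hnl). subst l. rewrite vnorm_vzero in Hl. lra.
Qed.

End Cone.

Section Efficient.
Context {p : nat} (P : vec p -> Prop) (HP : good_cone P).

Lemma greedy_step (A : vec p -> Prop) z B w :
  (forall a, A a -> ple P a z -> vnorm a <= B) -> A w -> ple P w z ->
  exists u, A u /\ ple P u w /\
    forall u', A u' -> ple P u' w -> vnorm (vsub w u') <= 2 * vnorm (vsub w u).
Proof.
  intros HB Hw Hwz.
  set (E := fun r => exists u', A u' /\ ple P u' w /\ r = vnorm (vsub w u')).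
  assert (HEb : bound E).
  { exists (2 * B). intros r [u' [Hu1 [Hu2 ->]]].
    pose proof (HB u' Hu1 (ple_trans P HP _ _ _ Hu2 Hwz)). pose proof (HB w Hw Hwz).
    replace (vsub w u') with (vadd w (vopp u')) by vext.
    eapply Rle_trans; [apply vnorm_triangle|]. rewrite vnorm_opp. lra. }
  assert (HE0 : E 0).
  { exists w. repeat split; auto; [apply ple_refl, HP|].
    replace (vsub w w) with (@vzero p) by vext. now rewrite vnorm_vzero. }
  destruct (completeness E HEb (ex_intro _ 0 HE0)) as [F [HF1 HF2]].
  assert (HFge : 0 <= F) by (apply HF1; auto).
  assert (HFub : forall u', A u' -> ple P u' w -> vnorm (vsub w u') <= F)
    by (intros u' H1 H2; apply HF1; exists u'; auto).
  destruct (Req_dec F 0) as [HF0|HF0].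
  - exists w. repeat split; auto; [apply ple_refl, HP|]. intros u' H1 H2. specialize (HFub u' H1 H2).
    replace (vsub w w) with (@vzero p) by vext. rewrite vnorm_vzero. lra.
  - assert (exists u, A u /\ ple P u w /\ F / 2 < vnorm (vsub w u)) as [u [Hu1 [Hu2 Hu3]]].
    { apply NNPP; intro Hn. assert (F <= F / 2); [|lra]. apply HF2.
      intros r [u' [Hu1 [Hu2 ->]]]. apply Rnot_lt_le. intro. apply Hn. exists u'; auto. }
    exists u. repeat split; auto. intros u' H1 H2. specialize (HFub u' H1 H2). lra.
Qed.

(* A bounded P-decreasing sequence converges, to a lower bound of all its terms
   (compactness gives a cluster point, normality of the cone the full convergence). *)
Lemma decreasing_converges (w : nat -> vec p) B :
  (forall k, ple P (w (S k)) (w k)) -> (forall k, vnorm (w k) <= B) ->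
  exists ws, vcv w ws /\ forall k, ple P ws (w k).
Proof.
  intros Hdec HB.
  assert (Hchain : forall k j, (k <= j)%nat -> ple P (w j) (w k)).
  { intros k j Hkj. induction Hkj as [|j _ IH]; [apply ple_refl, HP|].
    apply (ple_trans P HP _ (w j)); auto. }
  destruct (bounded_subseq w B HB) as [phi [ws [Hphi Hcv]]].
  assert (Hlow : forall k, ple P ws (w k)).
  { intro k. apply (closed_lim P (fun j => vsub (w k) (w (phi (k + j)%nat)))); [apply cone_closed, HP| |].
    - intro j. apply Hchain. pose proof (extraction_ge phi Hphi (k + j)). lia.
    - apply vcv_intro. intros eps He. destruct (vcv_elim _ _ Hcv eps He) as [N HN].
      exists N. intros j Hj.
      replace (vsub (vsub (w k) (w (phi (k + j)%nat))) (vsub (w k) ws))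
        with (vopp (vsub (w (phi (k + j)%nat)) ws)) by vext.
      rewrite vnorm_opp. apply HN. lia. }
  exists ws. split; auto.
  destruct (cone_normal P HP) as [C [HC HCb]].
  apply vcv_intro. intros eps He.
  destruct (vcv_elim _ _ Hcv (eps / C) (Rdiv_lt_0_compat _ _ He HC)) as [N HN].
  exists (phi N). intros n Hn.
  assert (vnorm (vsub (w n) ws) <= C * vnorm (vsub (w (phi N)) ws)).
  { apply HCb; [apply Hlow|]. unfold ple.
    replace (vsub (vsub (w (phi N)) ws) (vsub (w n) ws)) with (vsub (w (phi N)) (w n)) by vext.
    apply Hchain; auto. }
  specialize (HN N (le_n _)).
  assert (C * vnorm (vsub (w (phi N)) ws) < C * (eps / C)) by (apply Rmult_lt_compat_l; auto).
  replace (C * (eps / C)) with eps in * by (field; lra). lra.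
Qed.

(* The point is the
   limit of a near-greedy descent. *)
Lemma exists_efficient_below (A : vec p -> Prop) z B :
  vclosed A -> (exists a0, A a0 /\ ple P a0 z) -> (forall a, A a -> ple P a z -> vnorm a <= B) ->
  exists m, Eff A P m /\ ple P m z.
Proof.
  intros HA [a0 [Ha0 Ha0z]] HB.
  assert (Hstep : forall w, exists u, A w /\ ple P w z -> A u /\ ple P u w /\
            forall u', A u' -> ple P u' w -> vnorm (vsub w u') <= 2 * vnorm (vsub w u)).
  { intro w. destruct (classic (A w /\ ple P w z)) as [[Hw Hwz]|Hn]; [|exists w; tauto].
    destruct (greedy_step A z B w HB Hw Hwz) as [u Hu]. exists u; auto. }
  apply choice in Hstep as [next Hnext].
  set (w := fun k => Nat.iter k next a0).
  assert (Hadm : forall k, A (w k) /\ ple P (w k) z).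
  { induction k as [|k IH]; [split; auto|].
    destruct (Hnext _ IH) as [H1 [H2 _]]. split; [exact H1 | apply (ple_trans P HP _ (w k)); [exact H2 | apply IH]]. }
  assert (Hdec : forall k, ple P (w (S k)) (w k)) by (intro k; apply (Hnext _ (Hadm k))).
  assert (Hbnd : forall k, vnorm (w k) <= B) by (intro k; apply HB; apply Hadm).
  destruct (decreasing_converges w B Hdec Hbnd) as [ws [Hcv Hlow]].
  assert (HAws : A ws) by (apply (closed_lim A w); auto; intro; apply Hadm).
  exists ws. split; [split; auto | apply (ple_trans P HP _ (w 0%nat)); [apply Hlow | apply Hadm]].
  intros z' Hz' [q [Hq ->]].
  (* z' = ws - q lies below every w k, so the greedy steps, which become small, bound |q|. *)
  enough (q = vzero) by (subst q; vext).
  apply vnorm_small. intros eps He.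
  destruct (vcv_elim _ _ Hcv (eps / 5) ltac:(lra)) as [N HN].
  pose proof (HN N (le_n _)). pose proof (HN (S N) ltac:(lia)).
  assert (Hbelow : ple P (vsub ws q) (w N)).
  { apply (ple_trans P HP _ ws); [|apply Hlow]. unfold ple. replace (vsub ws (vsub ws q)) with q by vext. auto. }
  destruct (Hnext _ (Hadm N)) as [_ [_ Hgreedy]].
  specialize (Hgreedy _ Hz' Hbelow). change (next (w N)) with (w (S N)) in Hgreedy.
  pose proof (vnorm_sub_tri (w N) ws (w (S N))).
  pose proof (vnorm_sub_tri ws (w N) (vsub ws q)).
  rewrite (vnorm_sub_sym ws (w (S N))), (vnorm_sub_sym ws (w N)) in *.
  replace (vsub ws (vsub ws q)) with q in * by vext. lra.
Qed.

End Efficient.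

Lemma Tgph_step {n p} (G : R -> vec n -> vec p -> Prop) t x y tau v w e1 e2 :
  Tgph G t x y tau v w -> 0 < e1 -> 0 < e2 ->
  exists h tau' v' w', 0 < h < e1 /\ tnorm (tau' - tau) (vsub v' v) (vsub w' w) < e2 /\
    G (t + h * tau') (vadd x (vscal h v')) (vadd y (vscal h w')).
Proof.
  intros [h [ta [vk [wk [Hh1 [Hh2 [Hc Hg]]]]]]] He1 He2.
  destruct (Un_cv0_elim h Hh2 _ He1) as [N1 HN1].
  destruct (Un_cv0_elim _ Hc _ He2) as [N2 HN2].
  specialize (HN1 (max N1 N2) ltac:(lia)). specialize (HN2 (max N1 N2) ltac:(lia)).
  specialize (Hh1 (max N1 N2)).
  rewrite Rabs_pos_eq in HN1 by lra. rewrite Rabs_pos_eq in HN2 by (unfold tnorm; apply sqrt_pos).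
  exists (h (max N1 N2)), (ta (max N1 N2)), (vk (max N1 N2)), (wk (max N1 N2)). auto.
Qed.

(* The contingent cone of a graph is closed: for w in its closure, a step of size
   below 1/(k+1) towards a nearby tangent vector is a step towards w with error 4/(k+1). *)
Lemma Tgph_closed {n p} (G : R -> vec n -> vec p -> Prop) t x y tau v :
  vclosed (Tgph G t x y tau v).
Proof.
  intros w Hw.
  assert (Hk : forall k : nat, exists q : R * R * vec n * vec p,
     let '(h, ta, vk, wk) := q in
     0 < h /\ Rabs h <= 1 * / (INR k + 1) /\
     Rabs (tnorm (ta - tau) (vsub vk v) (vsub wk w)) <= 4 * / (INR k + 1) /\
     G (t + h * ta) (vadd x (vscal h vk)) (vadd y (vscal h wk))).
  { intro k. pose proof (inv_succ_pos k) as Hk.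
    destruct (Hw _ Hk) as [w' [Hw' Hww']].
    destruct (Tgph_step G t x y tau v w' _ _ Hw' Hk Hk) as [h [ta [vk [wk [Hh [Herr Hg]]]]]].
    exists (h, ta, vk, wk).
    split; [lra|]. split; [rewrite Rabs_pos_eq; lra|]. split; [|exact Hg].
    rewrite Rabs_pos_eq by (unfold tnorm; apply sqrt_pos).
    eapply Rle_trans; [apply tnorm_le|].
    destruct (tnorm_ge (ta - tau) (vsub vk v) (vsub wk w')) as [A1 [A2 A3]].
    pose proof (vnorm_sub_tri wk w' w). rewrite (vnorm_sub_sym w' w) in H. lra. }
  apply choice in Hk as [q Hq].
  exists (fun k => fst (fst (fst (q k)))), (fun k => snd (fst (fst (q k)))),
         (fun k => snd (fst (q k))), (fun k => snd (q k)).
  split; [|split; [apply (Un_cv0_of_bound _ 1) | split; [apply (Un_cv0_of_bound _ 4) |]]];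
    intro k; specialize (Hq k); destruct (q k) as [[[h ta] vk] wk]; apply Hq.
Qed.

(* Lipschitz continuity of W around (t,x) turns a graph-derivative direction (1,v,d)
   into an approximate contingent direction of W(t,x) + P at y: for arbitrarily small
   h > 0, y + h om lies in W(t,x) + P with om within a fixed distance K of d. *)
Lemma graph_derivative_near_tangent {n p} T (P : vec p -> Prop) (W : R -> vec n -> vec p -> Prop)
  t x y Mf :
  0 <= t <= T -> lipschitz_around T W t x -> 0 <= Mf ->
  exists K, 0 < K /\ forall v d eta, vnorm v <= Mf -> 0 < eta -> DWup T P W t x y 1 v d ->
    exists h om, 0 < h < eta /\ Wup P W t x (vadd y (vscal h om)) /\ vnorm (vsub om d) <= K.
Proof.
  intros Ht [l [dl [Hl [Hdl HL]]]] HMf.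
  exists (1 + l * (Mf + 3)). split; [nra|].
  intros v d eta Hv Heta HD.
  assert (He0 : 0 < Rmin eta (dl / (Mf + 3))) by (apply Rmin_pos; [|apply Rdiv_lt_0_compat]; lra).
  destruct (Tgph_step _ t x y 1 v d _ 1 HD He0 ltac:(lra))
    as [h [ta [vk [wk [[Hh0 Hh] [Herr [Hgt [y1 [q [Hy1 [Hq Heq]]]]]]]]]]].
  destruct (tnorm_ge (ta - 1) (vsub vk v) (vsub wk d)) as [A1 [A2 A3]].
  pose proof (Rmin_l eta (dl / (Mf + 3))). pose proof (Rmin_r eta (dl / (Mf + 3))).
  assert (Hta : Rabs ta <= 2).
  { pose proof (Rabs_triang (ta - 1) 1). replace (ta - 1 + 1) with ta in H1 by ring.
    rewrite Rabs_R1 in H1. lra. }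
  assert (Hvk : vnorm vk <= Mf + 1) by (pose proof (vnorm_le_sub vk v); lra).
  assert (Hh_dl : h * (Mf + 3) < dl).
  { assert (h < dl / (Mf + 3)) as Hlt by lra.
    apply Rmult_lt_compat_r with (r := Mf + 3) in Hlt; [|lra].
    unfold Rdiv in Hlt. rewrite Rmult_assoc, Rinv_l, Rmult_1_r in Hlt by lra. exact Hlt. }
  (* the perturbed base point (t + h ta, x + h vk) stays within h (Mf + 3) < dl of (t, x) *)
  assert (Hpn : pnorm (fun _ : Fin.t 1 => t + h * ta - t) (vsub (vadd x (vscal h vk)) x)
                <= h * (Mf + 3)).
  { eapply Rle_trans; [apply pnorm_time_le|].
    replace (vsub (vadd x (vscal h vk)) x) with (vscal h vk) by vext.
    replace (t + h * ta - t) with (h * ta) by ring.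
    rewrite vnorm_scal, Rabs_mult, Rabs_pos_eq by lra. nra. }
  destruct (HL (t + h * ta) (vadd x (vscal h vk)) t x Hgt Ht) with (y1 := y1)
    as [y2 [Hy2 Hyy]]; [lra| |exact Hy1|].
  { eapply Rle_lt_trans; [apply pnorm_time_le|]. replace (t - t) with 0 by ring.
    replace (vsub x x) with (@vzero n) by vext. rewrite Rabs_R0, vnorm_vzero. lra. }
  assert (Hy12 : vnorm (vsub y1 y2) <= h * (l * (Mf + 3))).
  { eapply Rle_trans; [exact Hyy|]. apply Rmult_le_compat_l with (r := l) in Hpn; lra. }
  (* the point y2 + q of W(t,x) + P is y + h om with om = wk - (y1 - y2) / h *)
  exists h, (vsub wk (vscal (/ h) (vsub y1 y2))). split; [lra|]. split.
  - exists y2, q. repeat split; auto. apply functional_extensionality; intro j.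
    assert (Hj : vadd y (vscal h wk) j = vadd y1 q j) by (rewrite Heq; reflexivity).
    unfold vadd, vscal, vsub in *. field_simplify; [|lra]. lra.
  - replace (vsub (vsub wk (vscal (/ h) (vsub y1 y2))) d)
      with (vadd (vsub wk d) (vopp (vscal (/ h) (vsub y1 y2)))) by vext.
    eapply Rle_trans; [apply vnorm_triangle|].
    rewrite vnorm_opp, vnorm_scal, Rabs_pos_eq by (left; apply Rinv_0_lt_compat; lra).
    assert (/ h * vnorm (vsub y1 y2) <= l * (Mf + 3)).
    { apply Rmult_le_reg_l with h; [lra|]. rewrite <- Rmult_assoc, Rinv_r, Rmult_1_l by lra. lra. }
    lra.
Qed.

(* Rescaled approximate steps give a contingent direction: if y + h_k om_k lies in S,
   with h_k |d_k| < 1/(k+1), |om_k - d_k| <= K and |d_k| > k + 1, then every limit l of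
   d_k/|d_k| along an extraction is tangent to S at y (take steps h_k |d_k| in the
   directions om_k/|d_k|). *)
Lemma normalized_steps_tangent {p} (S : vec p -> Prop) y (d om : nat -> vec p) (h : nat -> R) K phi l :
  extraction phi -> vcv (fun j => vscal (/ vnorm (d (phi j))) (d (phi j))) l ->
  (forall k, INR k + 1 < vnorm (d k)) -> (forall k, 0 < h k < / ((INR k + 1) * vnorm (d k))) ->
  (forall k, S (vadd y (vscal (h k) (om k)))) -> (forall k, vnorm (vsub (om k) (d k)) <= K) ->
  Tcone S y l.
Proof.
  intros Hphi Hcv Hd Hh HS Hom.
  assert (Hd0 : forall k, 0 < vnorm (d k)) by (intro k; pose proof (Hd k); pose proof (pos_INR k); lra).
  assert (HK : 0 <= K) by (pose proof (Hom 0%nat); pose proof (vnorm_ge0 (vsub (om 0%nat) (d 0%nat))); lra).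
  exists (fun j => h (phi j) * vnorm (d (phi j))), (fun j => vscal (/ vnorm (d (phi j))) (om (phi j))).
  repeat split.
  - intro j. apply Rmult_lt_0_compat; [apply Hh | apply Hd0].
  - apply (Un_cv0_of_bound _ 1). intro j. destruct (Hh (phi j)) as [Hh0 Hhj].
    pose proof (Hd0 (phi j)). pose proof (pos_INR (phi j)).
    rewrite Rabs_pos_eq by nra. eapply Rle_trans; [|rewrite Rmult_1_l; apply extraction_inv_succ, Hphi].
    rewrite Rinv_mult in Hhj.
    apply Rmult_lt_compat_r with (r := vnorm (d (phi j))) in Hhj; [|lra].
    rewrite Rmult_assoc, Rinv_l, Rmult_1_r in Hhj by lra. lra.
  - apply (vcv_perturb _ _ l K Hcv). intro j.
    pose proof (Hd (phi j)). pose proof (Hd0 (phi j)). pose proof (pos_INR (phi j)).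
    replace (vsub (vscal (/ vnorm (d (phi j))) (om (phi j))) (vscal (/ vnorm (d (phi j))) (d (phi j))))
      with (vscal (/ vnorm (d (phi j))) (vsub (om (phi j)) (d (phi j)))) by vext.
    rewrite vnorm_scal, Rabs_pos_eq by (left; apply Rinv_0_lt_compat; lra).
    apply Rle_trans with (K * / (INR (phi j) + 1));
      [|apply Rmult_le_compat_l; [lra | apply extraction_inv_succ, Hphi]].
    rewrite Rmult_comm. apply Rmult_le_compat;
      [apply vnorm_ge0 | left; apply Rinv_0_lt_compat; lra | apply Hom | apply Rinv_le_contravar; lra].
  - intro j. pose proof (Hd0 (phi j)).
    replace (vadd y (vscal (h (phi j) * vnorm (d (phi j))) (vscal (/ vnorm (d (phi j))) (om (phi j)))))
      with (vadd y (vscal (h (phi j)) (om (phi j)))); [apply HS | vext; field; lra].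
Qed.

(* Otherwise the normalised values
   d_k / |d_k| cluster at a unit vector l with -l in P which, by the previous lemma, is
   tangent to W(t,x) + P at y: this contradicts proper efficiency. *)
Lemma derivative_bound {n p} T (P : vec p -> Prop) (W : R -> vec n -> vec p -> Prop) t x y Mf :
  good_cone P -> 0 <= t <= T -> lipschitz_around T W t x -> 0 <= Mf ->
  (forall v, Tcone (vsum_set (W t x) P) y v -> P (vopp v) -> v = vzero) ->
  exists C, 0 <= C /\ forall v d z, vnorm v <= Mf -> DWup T P W t x y 1 v d -> ple P d z ->
    vnorm d <= C * (1 + vnorm z).
Proof.
  intros HP Ht Hlip HMf HPE.
  destruct (graph_derivative_near_tangent T P W t x y Mf Ht Hlip HMf) as [K [HK Hnear]].
  apply NNPP; intro Hn.
  assert (Hk : forall k : nat, exists vdz : vec n * vec p * vec p,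
     vnorm (fst (fst vdz)) <= Mf /\ DWup T P W t x y 1 (fst (fst vdz)) (snd (fst vdz)) /\
     ple P (snd (fst vdz)) (snd vdz) /\ (INR k + 1) * (1 + vnorm (snd vdz)) < vnorm (snd (fst vdz))).
  { intro k. apply NNPP; intro Hk. apply Hn. exists (INR k + 1). split; [pose proof (pos_INR k); lra|].
    intros v d z Hv Hd Hz. apply Rnot_lt_le. intro Hlt. apply Hk. exists (v, d, z); auto. }
  apply choice in Hk as [g Hg].
  pose (v k := fst (fst (g k))). pose (d k := snd (fst (g k))). pose (z k := snd (g k)).
  assert (Hvdz : forall k, vnorm (v k) <= Mf /\ DWup T P W t x y 1 (v k) (d k) /\
                   ple P (d k) (z k) /\ (INR k + 1) * (1 + vnorm (z k)) < vnorm (d k)) by exact Hg.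
  assert (Hd : forall k, INR k + 1 < vnorm (d k)).
  { intro k. destruct (Hvdz k) as [_ [_ [_ H]]]. pose proof (vnorm_ge0 (z k)). pose proof (pos_INR k). nra. }
  assert (Hd0 : forall k, 0 < vnorm (d k)) by (intro k; pose proof (Hd k); pose proof (pos_INR k); lra).
  destruct (dominated_direction P HP d z) as [phi [l [Hphi [Hcv [Hl Hnl]]]]].
  { intro k; apply Hvdz. }
  { intro k. destruct (Hvdz k) as [_ [_ [_ H]]]. pose proof (pos_INR k). nra. }
  assert (Hstep : forall k, exists ho : R * vec p,
    0 < fst ho < / ((INR k + 1) * vnorm (d k)) /\ Wup P W t x (vadd y (vscal (fst ho) (snd ho))) /\
    vnorm (vsub (snd ho) (d k)) <= K).
  { intro k. destruct (Hvdz k) as [Hv [HD _]].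
    assert (0 < / ((INR k + 1) * vnorm (d k))).
    { apply Rinv_0_lt_compat, Rmult_lt_0_compat; [pose proof (pos_INR k); lra | apply Hd0]. }
    destruct (Hnear (v k) (d k) _ Hv H HD) as [h [om Hhom]]. exists (h, om). exact Hhom. }
  apply choice in Hstep as [ho Hho].
  assert (Htan : Tcone (vsum_set (W t x) P) y l).
  { apply (normalized_steps_tangent _ y d (fun k => snd (ho k)) (fun k => fst (ho k)) K phi l); auto;
      intro k; apply Hho. }
  pose proof (HPE l Htan Hnl). subst l. rewrite vnorm_vzero in Hl. lra.
Qed.

Lemma lincomb_bound {a b k} (S : vec a * vec b -> Prop) (pr : vec a * vec b -> vec k) M :
  0 <= M -> (forall w, S w -> vnorm (pr w) <= M) ->
  forall l : list (R * (vec a * vec b)), (forall c, In c l -> 0 <= fst c /\ S (snd c)) ->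
  vnorm (fold_right (fun c s => vadd (vscal (fst c) (pr (snd c))) s) vzero l)
    <= fold_right (fun c s => fst c + s) 0 l * M.
Proof.
  intros HM HS l. induction l as [|c l IH]; intro Hl; simpl.
  - rewrite vnorm_vzero. lra.
  - eapply Rle_trans; [apply vnorm_triangle|].
    destruct (Hl c (or_introl eq_refl)) as [Hc1 Hc2].
    rewrite vnorm_scal, Rabs_pos_eq by auto.
    specialize (IH (fun c' H => Hl c' (or_intror H))). specialize (HS _ Hc2).
    assert (fst c * vnorm (pr (snd c)) <= fst c * M) by (apply Rmult_le_compat_l; auto). lra.
Qed.

Lemma FL_bounded {n m p} (U : vec m -> Prop) (f : vec n -> vec m -> vec n)
  (L : vec n -> vec m -> vec p) x :
  MOC_regular U f -> MOC_regular U L ->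
  exists Mf ML, 0 <= Mf /\ 0 <= ML /\
    forall fv Lv, FL U f L x (fv, Lv) -> vnorm fv <= Mf /\ vnorm Lv <= ML.
Proof.
  intros [_ [[Mf HMf] _]] [_ [[ML HML] _]].
  exists (Rabs Mf + 1), (Rabs ML + 1).
  split; [pose proof (Rabs_pos Mf); lra|]. split; [pose proof (Rabs_pos ML); lra|].
  intros fv Lv H.
  destruct (H 1 ltac:(lra)) as [w [[l [_ [Hl [Hs [Hw1 Hw2]]]]] Hpn]].
  simpl in Hpn. destruct (pnorm_ge (vsub fv (fst w)) (vsub Lv (snd w))) as [P1 P2].
  set (S := fun z => exists u, U u /\ z = (f x u, L x u)) in Hl.
  assert (B1 : vnorm (fst w) <= Rabs Mf).
  { rewrite Hw1, <- (Rmult_1_l (Rabs Mf)), <- Hs.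
    apply (lincomb_bound S fst); [apply Rabs_pos | | exact Hl].
    intros z [u [Hu ->]]. eapply Rle_trans; [apply HMf; auto | apply Rle_abs]. }
  assert (B2 : vnorm (snd w) <= Rabs ML).
  { rewrite Hw2, <- (Rmult_1_l (Rabs ML)), <- Hs.
    apply (lincomb_bound S snd); [apply Rabs_pos | | exact Hl].
    intros z [u [Hu ->]]. eapply Rle_trans; [apply HML; auto | apply Rle_abs]. }
  pose proof (vnorm_le_sub fv (fst w)). pose proof (vnorm_le_sub Lv (snd w)). lra.
Qed.

Definition cost_derivatives {n m p} T (U : vec m -> Prop) (f : vec n -> vec m -> vec n)
  (L : vec n -> vec m -> vec p) (P : vec p -> Prop) (W : R -> vec n -> vec p -> Prop)
  t x y : vec p -> Prop :=
  fun z => exists fv Lv d, FL U f L x (fv, Lv) /\ DupW T P W t x y 1 fv d /\ z = vadd Lv d.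

Lemma cost_derivatives_lower_bounded {n m p} T (U : vec m -> Prop) f L P
  (W : R -> vec n -> vec p -> Prop) t x y Mf ML C :
  0 <= C -> (forall fv Lv, FL U f L x (fv, Lv) -> vnorm fv <= Mf /\ vnorm Lv <= ML) ->
  (forall v d z, vnorm v <= Mf -> DWup T P W t x y 1 v d -> ple P d z -> vnorm d <= C * (1 + vnorm z)) ->
  forall a, vcl (cost_derivatives T U f L P W t x y) a -> ple P a vzero ->
    vnorm a <= 1 + ML + C * (2 + ML).
Proof.
  intros HC HFL Hbound a Ha Ha0.
  destruct (Ha 1 ltac:(lra)) as [s [[fv [Lv [d [HF [[Hd _] ->]]]]] Has]].
  destruct (HFL fv Lv HF) as [Hfv HLv].
  (* z := d - a dominates d, since z - d = -a >= 0, and |z| <= |Lv + d - a| + |Lv| *)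
  set (z := vsub d a).
  assert (Hdz : ple P d z).
  { unfold ple, z. replace (vsub (vsub d a) d) with (vsub vzero a) by vext. exact Ha0. }
  assert (Hz : vnorm z <= ML + 1).
  { unfold z. replace (vsub d a) with (vadd (vsub (vadd Lv d) a) (vopp Lv)) by vext.
    eapply Rle_trans; [apply vnorm_triangle|]. rewrite vnorm_opp, vnorm_sub_sym. lra. }
  pose proof (Hbound fv d z Hfv Hd Hdz).
  assert (C * (1 + vnorm z) <= C * (2 + ML)) by (apply Rmult_le_compat_l; lra).
  pose proof (vnorm_le_sub a (vadd Lv d)). pose proof (vnorm_triangle Lv d). lra.
Qed.

Theorem proposition6p3 (T : R) (n m p : nat) (U : vec m -> Prop)
  (f : vec n -> vec m -> vec n) (L : vec n -> vec m -> vec p)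
  (P : vec p -> Prop) (W : R -> vec n -> vec p -> Prop)
  (t : R) (x : vec n) (y : vec p) :
  0 < T -> (1 <= n)%nat -> (1 <= m)%nat -> (1 <= p)%nat ->
  nonempty_compact U -> MOC_regular U f -> MOC_regular U L ->
  good_cone P ->
  gen_contingent_solution T U f L P W ->
  0 <= t < T -> W t x y ->
  lipschitz_around T W t x ->
  PEff (W t x) P y ->
  vsum_set
    (Eff (vcl (fun z => exists fv Lv d, FL U f L x (fv, Lv) /\
                 DupW T P W t x y 1 fv d /\ z = vadd Lv d)) P)
    P vzero.
Proof.
  intros _ _ _ _ _ Hf HL HP [_ [Hsol _]] Ht Hy Hlip [_ HPE].
  destruct (FL_bounded U f L x Hf HL) as [Mf [ML [HMf [HML HFL]]]].
  destruct (derivative_bound T P W t x y Mf HP ltac:(lra) Hlip HMf HPE) as [C [HC Hbound]].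
  (* by (i), -Lb is a value of DW_up((t,x,y);(1,fb)) for some (fb,Lb) in (FL)(x);
     an efficient value e below it gives the element Lb + e <= 0 of cost_derivatives *)
  destruct (Hsol t x y Ht Hy) as [fb [Lb [HFb HDb]]].
  destruct (exists_efficient_below P HP (DWup T P W t x y 1 fb) (vopp Lb) (C * (1 + vnorm (vopp Lb))))
    as [e [He Hele]].
  - apply Tgph_closed.
  - exists (vopp Lb). split; [exact HDb | apply ple_refl, HP].
  - intros a Ha Hale. apply (Hbound fb); auto. apply (HFL fb Lb HFb).
  - (* an efficient point s <= 0 of the closure of cost_derivatives, so 0 = s + (0 - s) *)
    destruct (exists_efficient_below P HP (vcl (cost_derivatives T U f L P W t x y)) vzero
                (1 + ML + C * (2 + ML))) as [s [Hs Hs0]].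
    + apply vcl_closed.
    + exists (vadd Lb e). split.
      * intros eps Heps. exists (vadd Lb e). split; [exists fb, Lb, e; auto|].
        replace (vsub (vadd Lb e) (vadd Lb e)) with (@vzero p) by vext. rewrite vnorm_vzero. exact Heps.
      * unfold ple. replace (vsub vzero (vadd Lb e)) with (vsub (vopp Lb) e) by vext. exact Hele.
    + apply (cost_derivatives_lower_bounded T U f L P W t x y Mf ML C HC HFL Hbound).
    + exists s, (vsub vzero s). split; [exact Hs | split; [exact Hs0 | vext]].
Qed.
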